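(* Let $X$ be a $T_1$ topological space. Then $C(X)_F\subseteq T''(X)$ (so that $C(X)_F$ is a subring of $T''(X)$) if and only if $X$ is a nowhere almost $P$-space.
   Context: $C(X)$ is the ring of real-valued continuous functions on $X$; a cozero set is a set $\{x: h(x)\neq 0\}$ with $h\in C(X)$. $T''(X)$ is the ring of all functions $f\colon X\to\mathbb{R}$ for which there is a dense cozero set $U$ of $X$ with $f|_U$ continuous. $C(X)_F$ is the ring of all functions $f\colon X\to\mathbb{R}$ whose set of points of discontinuity is finite. $\chi_A$ is the characteristic function of $A$. $X$ is a nowhere almost $P$-space if $\chi_{\{p\}}\in T''(X)$ for all $p\in X$. *)

From HB Require Import structures.
From mathcomp Require Import all_boot all_order all_algebra.
From mathcomp Require Import all_classical all_reals all_analysis.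
Set Implicit Arguments. Unset Strict Implicit. Unset Printing Implicit Defensive.
Import Order.TTheory GRing.Theory Num.Theory numFieldNormedType.Exports.
Local Open Scope classical_set_scope.
Local Open Scope ring_scope.

(* The reals are modelled by an arbitrary R : realType (any two are isomorphic). *)

Definition cozero_set (R : realType) (X : topologicalType) (U : set X) : Prop :=
  exists h : X -> R, continuous h /\ U = [set x | h x != 0].

Definition Tpp (R : realType) (X : topologicalType) (f : X -> R) : Prop :=
  exists U : set X, cozero_set R U /\ dense U /\ {within U, continuous f}.

Definition CF (R : realType) (X : topologicalType) (f : X -> R) : Prop :=
  finite_set [set x | ~ {for x, continuous f}].

Definition nowhere_almost_P (R : realType) (X : topologicalType) : Prop :=
  forall p : X, Tpp (\1_[set p] : X -> R).

(* If p is not isolated, a dense cozero set U witnessing chi_{p} in T''(X)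
   must miss p: U is open, so continuity of chi_{p} on U at p would make {p}
   a neighbourhood of p.  A function in C(X)_F is continuous at isolated
   points, so its finitely many discontinuities are all non-isolated, and the
   intersection of the corresponding dense cozero sets is again a dense cozero
   set, on which f is continuous.  Conversely, in a T1 space chi_{p} is
   continuous off p, hence lies in C(X)_F. *)

From HB Require Import structures.
From mathcomp Require Import all_boot all_order all_algebra.
From mathcomp Require Import all_classical all_reals all_analysis.
Set Implicit Arguments. Unset Strict Implicit. Unset Printing Implicit Defensive.
Local Open Scope classical_set_scope.
Local Open Scope ring_scope.

Import Order.TTheory GRing.Theory Num.Theory numFieldNormedType.Exports.

Lemma open_setC0 (R : realType) : open (~` [set 0 : R]).
Proof. exact/closed_openC/accessible_closed_set1/hausdorff_accessible/Rhausdorff. Qed.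

Section DenseCozero.
Variables (R : realType) (X : topologicalType).

Definition dense_cozero (U : set X) := cozero_set R U /\ dense U.

Lemma cozero_set_open (U : set X) : cozero_set R U -> open U.
Proof.
move=> [h [ch ->]].
have -> : [set x | h x != 0] = h @^-1` (~` [set 0]).
  by apply/seteqP; split => x /=; move/eqP.
by apply: open_comp; [move=> x _; exact: ch | exact: open_setC0].
Qed.

Lemma cozero_setT : cozero_set R (@setT X).
Proof.
exists (fun=> 1); split; first exact: cst_continuous.
by apply/seteqP; split => x //= _; exact: oner_neq0.
Qed.

Lemma cozero_setI (U V : set X) :
  cozero_set R U -> cozero_set R V -> cozero_set R (U `&` V).
Proof.
move=> [h [ch ->]] [g [cg ->]]; exists (h \* g); split.
  by move=> x; apply: continuousM; [exact: ch | exact: cg].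
by apply/seteqP; split => x /=; rewrite mulf_eq0 negb_or => /andP.
Qed.

Lemma dense_cozeroT : dense_cozero setT.
Proof. by split; [exact: cozero_setT | move=> O O0 _; rewrite setIT]. Qed.

Lemma dense_cozeroI (U V : set X) :
  dense_cozero U -> dense_cozero V -> dense_cozero (U `&` V).
Proof.
move=> [cU dU] [cV dV]; split; first exact: cozero_setI.
exact: denseI (cozero_set_open cU) dU dV.
Qed.

Lemma dense_cozero_avoid_seq (s : seq X) :
  (forall p, p \in s -> exists2 U, dense_cozero U & ~ U p) ->
  exists2 U, dense_cozero U & forall p, p \in s -> ~ U p.
Proof.
elim: s => [|p s IHs] avoid_s; first by exists setT; [exact: dense_cozeroT|].
have [|U dU Us] := IHs.
  by move=> q qs; apply: avoid_s; rewrite in_cons qs orbT.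
have [V dV NVp] := avoid_s p (mem_head p s).
exists (U `&` V); first exact: dense_cozeroI.
by move=> q; rewrite in_cons => /orP[/eqP-> | /Us NUq] [].
Qed.

Lemma dense_cozero_avoid_finite (D : set X) : finite_set D ->
  (forall p, D p -> exists2 U, dense_cozero U & ~ U p) ->
  exists2 U, dense_cozero U & U `<=` ~` D.
Proof.
move=> /finite_fsetP[F ->] avoid_F.
have [U dU UF] := @dense_cozero_avoid_seq (finmap.enum_fset F) avoid_F.
by exists U => // p Up Fp; exact: UF Fp Up.
Qed.

End DenseCozero.

Lemma continuous_at_isolated (X Y : topologicalType) (f : X -> Y) (p : X) :
  nbhs p [set p] -> {for p, continuous f}.
Proof.
move=> p_isolated; apply: (@near_cst_continuous _ _ (f p)).
by apply: filterS p_isolated => x ->.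
Qed.

Lemma within_continuous_off_discontinuities (X Y : topologicalType)
    (f : X -> Y) (U : set X) :
  U `<=` ~` [set x | ~ {for x, continuous f}] -> {within U, continuous f}.
Proof.
move=> U_cont; apply: continuous_in_subspaceT => x /set_mem Ux.
exact: contrapT (U_cont x Ux).
Qed.

Lemma indic1_continuous_off (R : realType) (X : topologicalType) (p x : X) :
  accessible_space X -> x <> p -> {for x, continuous (\1_[set p] : X -> R)}.
Proof.
move=> hT1 xp; apply: (@near_cst_continuous _ _ (\1_[set p] x : R)).
have : nbhs x (~` [set p]).
  by apply: open_nbhs_nbhs; split; [exact/closed_openC/accessible_closed_set1|].
by apply: filterS => y yp; rewrite !indicE !memNset.
Qed.

Lemma CF_indic1 (R : realType) (X : topologicalType) (p : X) :
  accessible_space X -> CF (\1_[set p] : X -> R).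
Proof.
move=> hT1; apply: sub_finite_set (finite_set1 p) => x /= discont_x.
by apply: contrapT => xp; exact/discont_x/indic1_continuous_off.
Qed.

Lemma within_continuous_indic1_isolated (R : realType) (X : topologicalType)
    (p : X) (U : set X) :
  open U -> U p -> {within U, continuous (\1_[set p] : X -> R)} ->
  nbhs p [set p].
Proof.
move=> oU Up /subspace_continuousP/(_ p Up) cont_p.
have nbhs_U : nbhs p U by exact: open_nbhs_nbhs.
have nbhs_1 : nbhs ((\1_[set p] : X -> R) p) (~` [set 0]).
  apply: open_nbhs_nbhs; split; first exact: open_setC0.
  by rewrite indicE mem_set //= => /eqP; rewrite oner_eq0.
have near_p : nbhs p (fun x => U x -> (\1_[set p] x : R) <> 0) :=
  cont_p _ nbhs_1.
apply: filterS2 near_p nbhs_U => x chi_x Ux; move: (chi_x Ux); rewrite indicE.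
by case: (boolP (x \in [set p])) => [/set_mem // | _]; rewrite mulr0n.
Qed.

Lemma nowhere_almost_P_avoid (R : realType) (X : topologicalType) (p : X) :
  nowhere_almost_P R X -> ~ nbhs p [set p] ->
  exists2 U, dense_cozero R U & ~ U p.
Proof.
move=> nap p_not_isolated; have [U [cU [dU cont]]] := nap p.
exists U => [// | Up]; apply: p_not_isolated.
exact: within_continuous_indic1_isolated (cozero_set_open cU) Up cont.
Qed.

Theorem theorem4p2 (R : realType) (X : topologicalType)
  (hT1 : @accessible_space X) :
  (forall f : X -> R, CF f -> Tpp f) <-> nowhere_almost_P R X.
Proof.
split=> [CF_Tpp p | nap f CFf]; first exact/CF_Tpp/CF_indic1.
have discont_not_isolated p : ~ {for p, continuous f} -> ~ nbhs p [set p].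
  by move=> discont_p p_isolated; apply/discont_p/continuous_at_isolated.
have [U [cU dU] U_cont] := dense_cozero_avoid_finite CFf
  (fun p discont_p =>
     nowhere_almost_P_avoid nap (discont_not_isolated p discont_p)).
by exists U; split=> //; split=> //; exact: within_continuous_off_discontinuities.
Qed.
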